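(* Let $D\subseteq M$ be $\operatorname{dcl}$-independent over $P$, and assume (OP) and (ind)$_D$. Then for every $A\subseteq P$, $\operatorname{cl}_D(A)=\operatorname{dcl}(A\cup D)\cap P$. In particular, $\operatorname{cl}_D$ is a pregeometry on $P$.
   Context: Let $\mathcal M=\langle M,<,+,0,\dots\rangle$ be an o-minimal expansion of an ordered group with a distinguished positive element $1$, in a language $\mathcal L$; $\operatorname{dcl}$ denotes definable closure in $\mathcal M$, and ''$\mathcal L_A$-definable'' means definable in $\mathcal M$ with parameters from $A\subseteq M$. Fix $P\subseteq M$ and let $\widetilde{\mathcal M}=\langle\mathcal M,P\rangle$; ''$A$-definable'' (unqualified) means definable in $\widetilde{\mathcal M}$ with parameters from $A\subseteq M$. $M^n$ has the product order topology; $\overline V$ is closure. A set $A$ is $\operatorname{dcl}$-independent over $P$ if no $a\in A$ lies in $\operatorname{dcl}((A\setminus\{a\})\cup P)$. For $D\subseteq M$, $P_{ind(D)}$ has universe $P$ and, for each $\mathcal L$-formula $\phi(x)$ with parameters from $D$, a relation $R_\phi=\{a\in P^{|x|}:\mathcal M\models\phi(a)\}$; for $A\subseteq P$, ''$A$-definable in $P_{ind(D)}$'' means definable there with parameters from $A$. $\operatorname{cl}_D$ denotes the definable closure operator of the structure $P_{ind(D)}$. (OP): for every $A\subseteq M$ with $A\setminus P$ $\operatorname{dcl}$-independent over $P$ and every $A$-definable $V\subseteq M^n$, $\overline V$ is $\mathcal L_A$-definable. (ind)$_D$: every $X\subseteq P^n$ definable in $P_{ind(D)}$ equals $\bigcup_{i=1}^l(Y_i\cap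 Q_i)$ for some $\mathcal L$-definable $Y_i\subseteq M^n$ and some $Q_i\subseteq P^n$ $\emptyset$-definable in $P_{ind(D)}$. *)

From mathcomp Require Import all_boot.
From Stdlib Require List.

Set Implicit Arguments.
Unset Strict Implicit.
Unset Printing Implicit Defensive.

(* Relational first-order structures.  A relation symbol [r] is interpreted *)
(* as a predicate on finite lists of elements; a symbol of fixed arity k is *)
(* one whose interpretation is False on lists of length <> k.  (Function    *)
(* symbols and constants are represented through their graphs; this does   *)
(* not change the definable sets.)                                          *)
Record Structure := MkStructure {
  car : Type;
  sym : Type;
  interp : sym -> seq car -> Prop
}.

Inductive formula (Sym : Type) : Type :=
| FEq : nat -> nat -> formula Sym
| FRel : Sym -> seq nat -> formula Sym
| FNot : formula Sym -> formula Sym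
| FAnd : formula Sym -> formula Sym -> formula Sym
| FEx : nat -> formula Sym -> formula Sym.

Definition upd (T : Type) (e : nat -> T) (i : nat) (a : T) : nat -> T :=
  fun k => if k == i then a else e k.

Fixpoint sat (S : Structure) (e : nat -> car S) (f : formula (sym S)) : Prop :=
  match f with
  | FEq i j => e i = e j
  | FRel r vs => interp r (map e vs)
  | FNot g => ~ sat e g
  | FAnd g h => sat e g /\ sat e h
  | FEx i g => exists a, sat (upd e i a) g
  end.

(* [X ⊆ (car S)^n] is definable in [S] with parameters from [A]:          *)
(* there is a formula phi(x_0..x_{n-1}, y_0..y_{m-1}) and parameters      *)
(* b_0..b_{m-1} in A such that X = phi(S, b).  Variables x_i are the       *)
(* variables 0..n-1 and y_k is variable n+k; the remaining variables are   *)
(* required not to matter (the equivalence holds for every assignment).    *)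
Definition definable (S : Structure) (A : car S -> Prop) (n : nat)
    (X : ('I_n -> car S) -> Prop) : Prop :=
  exists (f : formula (sym S)) (b : seq (car S)),
    (forall y, List.In y b -> A y) /\
    forall (x : 'I_n -> car S) (e : nat -> car S),
      (forall i : 'I_n, e (nat_of_ord i) = x i) ->
      (forall k y, List.nth_error b k = Some y -> e (n + k) = y) ->
      (X x <-> sat e f).

Definition dclS (S : Structure) (B : car S -> Prop) (a : car S) : Prop :=
  definable B (fun x : 'I_1 -> car S => x ord0 = a).

Definition expandP (S : Structure) (P : car S -> Prop) : Structure :=
  @MkStructure (car S) (option (sym S))
    (fun r l => match r with
                | Some r' => interp r' l
                | None => match l with [:: a] => P a | _ => False end
                end).

Definition dcl_indep (S : Structure) (A P : car S -> Prop) : Prop :=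
  forall a, A a -> ~ dclS (fun y => (A y /\ y <> a) \/ P y) a.

(* Closure in the product order topology on M^n (basic open sets are open *)
(* boxes; M has no endpoints since it is a nontrivial ordered group).      *)
Definition closure (M : Type) (lt : M -> M -> Prop) (n : nat)
    (V : ('I_n -> M) -> Prop) : ('I_n -> M) -> Prop :=
  fun x => forall lo hi : 'I_n -> M,
    (forall i, lt (lo i) (x i) /\ lt (x i) (hi i)) ->
    exists y, V y /\ (forall i, lt (lo i) (y i) /\ lt (y i) (hi i)).

(* S is an o-minimal expansion of an ordered group (M,<,+,0) with a        *)
(* distinguished positive element 1; <, +, 0, 1 are part of the language,  *)
(* i.e. (the graphs of) them are ∅-definable in S.                          *)
Definition lower_ok (M : Type) (lt : M -> M -> Prop) (a : option M) (y : M) :=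
  match a with Some a' => lt a' y | None => True end.
Definition upper_ok (M : Type) (lt : M -> M -> Prop) (a : option M) (y : M) :=
  match a with Some a' => lt y a' | None => True end.

Definition omin_ordered_group (S : Structure) (lt : car S -> car S -> Prop)
    (add : car S -> car S -> car S) (zero one : car S) : Prop :=
  definable (fun _ => False) (fun x : 'I_2 -> car S => lt (x ord0) (x ord_max)) /\
  definable (fun _ => False)
    (fun x : 'I_3 -> car S => add (x ord0) (x (inord 1)) = x ord_max) /\
  definable (fun _ => False) (fun x : 'I_1 -> car S => x ord0 = zero) /\
  definable (fun _ => False) (fun x : 'I_1 -> car S => x ord0 = one) /\
  (forall x, ~ lt x x) /\
  (forall x y z, lt x y -> lt y z -> lt x z) /\
  (forall x y, lt x y \/ x = y \/ lt y x) /\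
  (forall x y z, add x (add y z) = add (add x y) z) /\
  (forall x, add zero x = x /\ add x zero = x) /\
  (forall x, exists y, add x y = zero /\ add y x = zero) /\
  (forall x y z, lt x y -> lt (add z x) (add z y) /\ lt (add x z) (add y z)) /\
  lt zero one /\
  (forall X : ('I_1 -> car S) -> Prop, definable (fun _ => True) X ->
     exists (pts : seq (car S)) (ivs : seq (option (car S) * option (car S))),
       forall x, X x <-> (List.In (x ord0) pts \/
          exists iv, List.In iv ivs /\ lower_ok lt iv.1 (x ord0) /\ upper_ok lt iv.2 (x ord0))).

Definition OP (S : Structure) (lt : car S -> car S -> Prop) (P : car S -> Prop) : Prop :=
  forall A : car S -> Prop,
    dcl_indep (fun a => A a /\ ~ P a) P ->
    forall (n : nat) (V : ('I_n -> car S) -> Prop),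
      @definable (@expandP S P) A n V -> definable A (closure lt V).

(* The induced structure P_ind(D): universe P, and for each L-formula phi(x)  *)
(* with parameters from D a relation R_phi = phi(M) ∩ P^|x|.  We index the   *)
(* symbols directly by the L_D-definable sets Y ⊆ M^n (several formulas      *)
(* defining the same set give the same relation).                            *)
Record PIndSym (S : Structure) (D : car S -> Prop) := MkPIndSym {
  pis_n : nat;
  pis_Y : ('I_pis_n -> car S) -> Prop;
  pis_def : definable D pis_Y
}.

Definition PInd (S : Structure) (P D : car S -> Prop) : Structure :=
  @MkStructure {x : car S | P x} (PIndSym D)
    (fun r l => size l = pis_n r /\
       exists x : 'I_(pis_n r) -> {x : car S | P x},
         (forall i : 'I_(pis_n r), List.nth_error l (nat_of_ord i) = Some (x i)) /\
         @pis_Y S D r (fun i => proj1_sig (x i))).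

Definition clD (S : Structure) (P D : car S -> Prop) (A : car S -> Prop)
    (a : car S) : Prop :=
  exists Pa : P a,
    @dclS (@PInd S P D) (fun p => A (proj1_sig p)) (exist P a Pa).

Definition ind (S : Structure) (P D : car S -> Prop) : Prop :=
  forall (n : nat) (X : ('I_n -> car (@PInd S P D)) -> Prop),
    definable (fun _ => True) X ->
    exists (l : nat) (Y : nat -> ('I_n -> car S) -> Prop)
           (Q : nat -> ('I_n -> car (@PInd S P D)) -> Prop),
      (forall k, k < l -> definable (fun _ => True) (Y k)) /\
      (forall k, k < l -> definable (fun _ => False) (Q k)) /\
      (forall x, X x <-> exists2 k, k < l & Y k (fun i => proj1_sig (x i)) /\ Q k x).

Definition pregeometry (M : Type) (P : M -> Prop)
    (cl : (M -> Prop) -> M -> Prop) : Prop :=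
  (forall A, (forall a, A a -> P a) -> forall a, cl A a -> P a) /\
  (forall A, (forall a, A a -> P a) -> forall a, A a -> cl A a) /\
  (forall A B, (forall a, A a -> P a) -> (forall b, B b -> P b) ->
     (forall a, A a -> B a) -> forall a, cl A a -> cl B a) /\
  (forall A, (forall a, A a -> P a) -> forall a, cl (cl A) a -> cl A a) /\
  (forall A, (forall a, A a -> P a) -> forall a, cl A a ->
     exists s : seq M, (forall b, List.In b s -> A b) /\ cl (fun b => List.In b s) a) /\
  (forall A, (forall a, A a -> P a) -> forall a b, P a -> P b ->
     cl (fun x => A x \/ x = b) a -> ~ cl A a -> cl (fun x => A x \/ x = a) b).

(** Let [A ⊆ P]. If [a ∈ P] is [A]-definable in [P_ind(D)], relativising the
    defining formula to [P] and unfolding each [R_phi] into [phi] defines [{a}]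
    in [<M, P>] over [A ∪ D]; the part of [A ∪ D] outside [P] lies in [D], hence
    is dcl-independent over [P], and (OP) makes the closure of [{a}], which is
    [{a}], [L]-definable over [A ∪ D]. Conversely, if [a ∈ dcl(A ∪ D) ∩ P],
    turning the parameters from [A] into variables yields an [L_D]-definable
    relation, i.e. a relation of [P_ind(D)], which defines [a] over [A].

    So [cl_D(A) = dcl(A ∪ D) ∩ P], and [cl_D] inherits the pregeometry axioms
    from [dcl]. Exchange for [dcl] in an o-minimal expansion of an ordered group
    is proved without the monotonicity theorem: if [a ∈ dcl(B b) \ dcl(B)], then
    [a] is the value at [b] of a [B]-definable partial function. Either [b] is a
    boundary point of the set where the value is [a], and boundary points of
    definable sets are finitely many, hence definable, so [b ∈ dcl(B a)]; or the
    value is [a] near [b], hence, by connectedness, up to the first boundary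
    point of the [B]-definable set where the function is locally constant,
    which would put [a] in [dcl(B)]. The order is dense because a discretely
    ordered group is not o-minimal (consider its set of doubles). *)

From Pilot Require Import Defs.
From mathcomp Require Import all_boot zify.
From Stdlib Require List.
From Stdlib Require Import FunctionalExtensionality ProofIrrelevance Classical ClassicalEpsilon.

Set Implicit Arguments.
Unset Strict Implicit.
Unset Printing Implicit Defensive.

Lemma In_mem (T : eqType) (x : T) (l : seq T) : List.In x l <-> x \in l.
Proof.
elim: l => [|y l IH] //=; rewrite in_cons; split.
  by case=> [->|/IH ->]; rewrite ?eqxx ?orbT.
by case/orP=> [/eqP->|/IH]; [left|right].
Qed.

Lemma In_rcons (T : Type) (s : seq T) c y : List.In y (rcons s c) <-> List.In y s \/ y = c.
Proof.
rewrite -cats1; split=> [/(List.in_app_or s) [|[->|[]]]|H]; try tauto.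
by apply: List.in_or_app; case: H => [|->]; [left | right; left].
Qed.

Lemma In_nth (T : Type) (l : seq T) d k : k < size l -> List.In (nth d l k) l.
Proof. elim: l k => [|x l IH] [|k] //= Hk; [by left | right; exact: IH]. Qed.

Lemma nth_error_nth (T : Type) (l : seq T) k (d : T) :
  k < size l -> List.nth_error l k = Some (nth d l k).
Proof. elim: l k => [|x l IH] [|k] //= Hk; exact: IH. Qed.

Lemma nth_error_SomeP (T : Type) (l : seq T) k y :
  List.nth_error l k = Some y -> k < size l /\ forall d, nth d l k = y.
Proof. elim: l k => [|x l IH] [|k] //=; first by case=> ->. by move/IH. Qed.

Lemma In_remove (T : Type) (L : seq T) m : List.In m L ->
  exists L', size L' < size L /\ forall z, List.In z L -> z <> m -> List.In z L'.
Proof.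
elim: L => [|x L IH] //= Hm.
case: (classic (x = m)) => Hxm; first by exists L; split=> // z [<-|].
case: Hm => [/Hxm //|/IH [L' [HL' HL]]].
by exists (x :: L'); split=> // z [<-|Hz] Hzm; [left | right; apply: HL].
Qed.

Lemma proj1_sig_inj (T : Type) (P : T -> Prop) : injective (@proj1_sig T P).
Proof. exact: eq_sig_hprop (fun x => proof_irrelevance (P x)). Qed.

Section Formulas.
Variable S : Structure.
Notation M := (car S).
Notation form := (formula (sym S)).

Fixpoint rename (pi : nat -> nat) (f : form) : form :=
  match f with
  | FEq i j => FEq _ (pi i) (pi j)
  | FRel r vs => FRel r (map pi vs)
  | FNot g => FNot (rename pi g)
  | FAnd g h => FAnd (rename pi g) (rename pi h)
  | FEx i g => FEx (pi i) (rename pi g)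
  end.

Lemma sat_rename pi f (e : nat -> M) : injective pi ->
  sat e (rename pi f) <-> sat (e \o pi) f.
Proof.
move=> Hpi; elim: f e => [i j|r vs|g IH|g IHg h IHh|i g IH] e /=.
- by [].
- by rewrite -map_comp.
- have := IH e; tauto.
- have := IHg e; have := IHh e; tauto.
- have upd_comp a : upd e (pi i) a \o pi = upd (e \o pi) i a.
    by apply: functional_extensionality => k; rewrite /= /upd (inj_eq Hpi).
  by split=> -[a Ha]; exists a; [move/IH: Ha | apply/IH]; rewrite upd_comp.
Qed.

Fixpoint var_bound (f : form) : nat :=
  match f with
  | FEq i j => (maxn i j).+1
  | FRel _ vs => foldr (fun k m => maxn k.+1 m) 0 vs
  | FNot g => var_bound g
  | FAnd g h => maxn (var_bound g) (var_bound h)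
  | FEx i g => maxn i.+1 (var_bound g)
  end.

Lemma sat_agree f (e e' : nat -> M) :
  (forall k, k < var_bound f -> e k = e' k) -> (sat e f <-> sat e' f).
Proof.
elim: f e e' => [i j|r vs|g IH|g IHg h IHh|i g IH] e e' /= H.
- by rewrite !H // ltnS leq_max leqnn ?orbT.
- suff -> : map e vs = map e' vs by [].
  apply/eq_in_map => k Hk; apply: H.
  elim: vs Hk => //= v vs IHvs; rewrite in_cons leq_max => /orP[/eqP->|/IHvs->];
    by rewrite ?leqnn ?orbT.
- have := IH e e' H; tauto.
- have := IHg e e' (fun k Hk => H k (leq_trans Hk (leq_maxl _ _))).
  have := IHh e e' (fun k Hk => H k (leq_trans Hk (leq_maxr _ _))); tauto.
- have HH a : sat (upd e i a) g <-> sat (upd e' i a) g.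
    apply: IH => k Hk; rewrite /upd; case: eqP => // _.
    by apply: H; rewrite leq_max Hk orbT.
  by split=> -[a Ha]; exists a; apply/HH.
Qed.

Definition exists_vars (vs : seq nat) (f : form) : form := foldr (@FEx _) f vs.

Lemma sat_exists_vars vs f (e : nat -> M) :
  sat e (exists_vars vs f) <->
  exists w : nat -> M, sat (fun k => if k \in vs then w k else e k) f.
Proof.
elim: vs e => [|v vs IH] e /=; first by split; [exists e | case].
split.
- case=> a /IH [w Hw]; exists (fun k => if k \in vs then w k else a).
  congr (sat _ f): Hw; apply: functional_extensionality => k.
  rewrite in_cons /upd; case: (k \in vs); first by rewrite orbT.
  by case: eqP => [->|]; rewrite ?eqxx.
- case=> w Hw; exists (w v); apply/IH; exists w.
  congr (sat _ f): Hw; apply: functional_extensionality => k.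
  rewrite in_cons /upd; case: (k \in vs); first by rewrite orbT.
  by rewrite orbF; case: eqP => [->|].
Qed.

Fixpoint conj_list (l : seq form) : form :=
  if l is g :: l' then FAnd g (conj_list l') else FEq _ 0 0.

Lemma sat_conj_list l (e : nat -> M) :
  sat e (conj_list l) <-> (forall g, List.In g l -> sat e g).
Proof.
elim: l => [|g l IH] /=; first by split=> // _ g [].
rewrite IH; split; first by case=> H1 H2 h [<-|/H2].
by move=> H; split; [apply: H; left | move=> h Hh; apply: H; right].
Qed.

Definition edef0 (Z : (nat -> M) -> Prop) := exists f : form, forall e, Z e <-> sat e f.

(* Substituting [pi k] for each variable [k]: since [pi] need not be injective,
   the formula is shifted to fresh variables [sh + k], which are existentially
   quantified and constrained by [sh + k = pi k]. *)
Lemma edef0_comp (pi : nat -> nat) Z : edef0 Z -> edef0 (fun e => Z (e \o pi)).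
Proof.
case=> f Hf; pose N := var_bound f.
pose sh := (foldr maxn 0 (map pi (iota 0 N))).+1.
have pi_lt_sh k : k < N -> pi k < sh.
  move=> Hk; rewrite ltnS.
  have : pi k \in map pi (iota 0 N) by apply: map_f; rewrite mem_iota.
  elim: (map pi (iota 0 N)) => //= v l IHl; rewrite in_cons leq_max.
  by case/orP=> [/eqP->|/IHl->]; rewrite ?leqnn ?orbT.
have sh_inj : injective (addn sh) by move=> x y /eqP; rewrite eqn_add2l => /eqP.
pose vs := map (addn sh) (iota 0 N).
have mem_vs k : (k \in vs) = (sh <= k < sh + N).
  apply/mapP/idP.
    by case=> x; rewrite mem_iota add0n => /andP[_ Hx] ->; rewrite leq_addr ltn_add2l.
  move=> /andP[H1 H2]; exists (k - sh); last by rewrite subnKC.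
  by rewrite mem_iota add0n ltn_subLR.
pose eqs := map (fun k => FEq (sym S) (sh + k) (pi k)) (iota 0 N).
exists (exists_vars vs (FAnd (conj_list eqs) (rename (addn sh) f))) => e.
rewrite sat_exists_vars Hf; split.
- move=> H; exists (fun k => e (pi (k - sh))) => /=; split.
    apply/sat_conj_list => g /List.in_map_iff [k [<- /In_mem]] /=.
    rewrite mem_iota add0n => Hk.
    by rewrite mem_vs leq_addr ltn_add2l Hk addKn ifN // mem_vs negb_and -ltnNge pi_lt_sh.
  apply/sat_rename => //; move: H; apply: iffLR; apply: sat_agree => k Hk /=.
  by rewrite mem_vs leq_addr ltn_add2l Hk addKn.
- case=> w /= [/sat_conj_list Heqs /(sat_rename _ _ sh_inj) Hs].
  move: Hs; apply: iffLR; apply: sat_agree => k Hk /=.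
  have Hk' : List.In (FEq _ (sh + k) (pi k)) eqs.
    by apply: List.in_map; apply/In_mem; rewrite mem_iota.
  by move: (Heqs _ Hk') => /= ->; rewrite mem_vs ifN // negb_and -ltnNge pi_lt_sh.
Qed.

(* [params e s] is the assignment [s ++ e]: the parameters [s] occupy the
   variables [0 .. size s - 1] and [e] is shifted past them. *)
Definition params (e : nat -> M) (s : seq M) : nat -> M :=
  fun k => if k < size s then nth (e 0) s k else e (k - size s).

Definition edef (A : M -> Prop) (Y : (nat -> M) -> Prop) :=
  exists Z s, edef0 Z /\ (forall y, List.In y s -> A y) /\
              forall e, Y e <-> Z (params e s).

Lemma params_nil e : params e [::] = e.
Proof. by apply: functional_extensionality => k; rewrite /params subn0. Qed.

Lemma params_cat e s1 s2 : params e (s1 ++ s2) = params (params e s2) s1.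
Proof.
apply: functional_extensionality => k; rewrite /params size_cat nth_cat.
case: ifP => H1; case: ifP => H2 //.
- exact: set_nth_default.
- by case: ifP => H3; [apply: set_nth_default | lia].
- lia.
- by case: ifP => H3; [lia | rewrite subnDA].
Qed.

Lemma params_comp (pi : nat -> nat) e s :
  params (e \o pi) s =
  params e s \o (fun k => if k < size s then k else size s + pi (k - size s)).
Proof.
apply: functional_extensionality => k; rewrite /params /=; case: ifP => H.
  by rewrite H; apply: set_nth_default.
by rewrite ifN ?addKn //; lia.
Qed.

Lemma params_upd e i a s : params (upd e i a) s = upd (params e s) (i + size s) a.
Proof.
apply: functional_extensionality => k; rewrite /params /upd; case: ifP => H.
  have -> : (k == i + size s) = false by apply/eqP; lia.
  exact: set_nth_default.
case: (k =P i + size s) => [->|Hne]; first by rewrite addnK eqxx.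
by have -> : (k - size s == i) = false by apply/eqP; lia.
Qed.

Lemma edef_ext A Y Y' : (forall e, Y e <-> Y' e) -> edef A Y -> edef A Y'.
Proof.
move=> H [Z [s [HZ [Hs HY]]]]; exists Z, s; do 2!split=> //.
by move=> e; rewrite -H.
Qed.

Lemma edef_mono (A A' : M -> Prop) Y : (forall y, A y -> A' y) -> edef A Y -> edef A' Y.
Proof. move=> H [Z [s [HZ [Hs HY]]]]; exists Z, s; split=> //; split=> // y /Hs; exact: H. Qed.

Lemma edef_of0 A Y : edef0 Y -> edef A Y.
Proof. by move=> H; exists Y, [::]; do 2!split=> //; move=> e; rewrite params_nil. Qed.

Lemma edef_not A Y : edef A Y -> edef A (fun e => ~ Y e).
Proof.
move=> [Z [s [[f Hf] [Hs HY]]]]; exists (fun e => ~ Z e), s; split.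
  by exists (FNot f) => e /=; rewrite Hf.
by split=> // e; rewrite HY.
Qed.

Lemma edef_comp A (pi : nat -> nat) Y : edef A Y -> edef A (fun e => Y (e \o pi)).
Proof.
move=> [Z [s [HZ [Hs HY]]]].
pose rho k := if k < size s then k else size s + pi (k - size s).
exists (fun E => Z (E \o rho)), s; split; first exact: edef0_comp.
by split=> // e; rewrite HY params_comp.
Qed.

Lemma edef_and A Y1 Y2 : edef A Y1 -> edef A Y2 -> edef A (fun e => Y1 e /\ Y2 e).
Proof.
move=> [Z1 [s1 [HZ1 [Hs1 HY1]]]] [Z2 [s2 [HZ2 [Hs2 HY2]]]].
pose p1 k := if k < size s1 then k else k + size s2.
exists (fun E => Z1 (E \o p1) /\ Z2 (E \o addn (size s1))), (s1 ++ s2).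
split.
  have [[f1 Hf1] [f2 Hf2]] := (edef0_comp p1 HZ1, edef0_comp (addn (size s1)) HZ2).
  by exists (FAnd f1 f2) => e /=; rewrite Hf1 Hf2.
split; first by move=> y /(List.in_app_or s1) [/Hs1|/Hs2].
move=> e; rewrite HY1 HY2.
have -> : params e s1 = params e (s1 ++ s2) \o p1.
  apply: functional_extensionality => k; rewrite /params /p1 /= size_cat nth_cat.
  case: (ltnP k (size s1)) => H; first by rewrite ltn_addr // H.
  have -> : (k + size s2 < size s1 + size s2) = false by lia.
  by congr e; lia.
have -> : params e s2 = params e (s1 ++ s2) \o addn (size s1).
  apply: functional_extensionality => k; rewrite /params /= size_cat nth_cat.
  have -> : (size s1 + k < size s1) = false by lia.
  rewrite ltn_add2l addKn; case: ifP => H; first exact: set_nth_default.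
  by congr e; lia.
by [].
Qed.

Lemma edef_ex A i Y : edef A Y -> edef A (fun e => exists a, Y (upd e i a)).
Proof.
move=> [Z [s [[f Hf] [Hs HY]]]].
exists (fun E => exists a, Z (upd E (i + size s) a)), s; split.
  by exists (FEx (i + size s) f) => e /=; split=> -[a Ha]; exists a; apply/Hf.
by split=> // e; split=> -[a Ha]; exists a; move: Ha; rewrite HY params_upd.
Qed.

Lemma edef_eq A i j : edef A (fun e => e i = e j).
Proof. by apply: edef_of0; exists (FEq _ i j). Qed.

Lemma edef_rel A r vs : edef A (fun e => interp r (map e vs)).
Proof. by apply: edef_of0; exists (FRel r vs). Qed.

Lemma edef_const (A : M -> Prop) i c : A c -> edef A (fun e => e i = c).
Proof.
move=> Hc; exists (fun E => E i.+1 = E 0), [:: c]; split; first by exists (FEq _ i.+1 0).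
split; first by move=> y [<-|].
by move=> e; rewrite /params /= subn1.
Qed.

Lemma edef_prop A (Q : Prop) : edef A (fun _ => Q).
Proof.
case: (classic Q) => HQ.
  by apply: edef_ext (edef_eq A 0 0) => e; split.
by apply: edef_ext (edef_not (edef_eq A 0 0)) => e; split.
Qed.

Lemma edef_or A Y1 Y2 : edef A Y1 -> edef A Y2 -> edef A (fun e => Y1 e \/ Y2 e).
Proof.
move=> H1 H2; apply: (@edef_ext _ (fun e => ~ (~ Y1 e /\ ~ Y2 e))); first by move=> e; tauto.
by apply: edef_not; apply: edef_and; apply: edef_not.
Qed.

Lemma edef_imp A Y1 Y2 : edef A Y1 -> edef A Y2 -> edef A (fun e => Y1 e -> Y2 e).
Proof.
move=> H1 H2; apply: (@edef_ext _ (fun e => ~ (Y1 e /\ ~ Y2 e))); first by move=> e; tauto.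
by apply: edef_not; apply: edef_and => //; apply: edef_not.
Qed.

Lemma edef_iff A Y1 Y2 : edef A Y1 -> edef A Y2 -> edef A (fun e => Y1 e <-> Y2 e).
Proof. by move=> H1 H2; apply: edef_and; apply: edef_imp. Qed.

Lemma edef_all A i Y : edef A Y -> edef A (fun e => forall a, Y (upd e i a)).
Proof.
move=> H; apply: (@edef_ext _ (fun e => ~ exists a, ~ Y (upd e i a))).
  by move=> e; split=> [H1 a|H1 [a]//]; apply: NNPP => H2; apply: H1; exists a.
by apply/edef_not/(edef_ex i (Y := fun E => ~ Y E))/edef_not.
Qed.

Lemma edef_params (A B : M -> Prop) Y t : edef B Y -> (forall y, List.In y t -> A y) ->
  edef (fun y => A y \/ B y) (fun e => Y (params e t)).
Proof.
move=> [Z [s [HZ [Hs HY]]]] Ht; exists Z, (s ++ t); split=> //; split.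
  by move=> y /(List.in_app_or s) [/Hs|/Ht]; tauto.
by move=> e; rewrite HY params_cat.
Qed.

Lemma params1 e (c : M) : params e [:: c] = upd (e \o predn) 0 c.
Proof. by apply: functional_extensionality => -[|k]; rewrite /params /upd //= subn1. Qed.

Lemma edef_params_dcl B Y c : edef B Y -> edef B (fun e => e 0 = c) ->
  edef B (fun e => Y (params e [:: c])).
Proof.
move=> HY Hc.
have H : edef B (fun E => exists a, upd E 0 a 0 = c /\ Y (upd E 0 a)).
  exact/(edef_ex 0 (Y := fun E => E 0 = c /\ Y E))/edef_and.
apply: edef_ext (edef_comp predn H) => e; rewrite params1 /upd /=.
by split=> [[a [<-]]|]; last exists c.
Qed.

Section Transitivity.
Variables B C : M -> Prop.
Hypothesis dclC : forall c, C c -> edef B (fun e => e 0 = c).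

Lemma edef_params_trans s Y : edef B Y -> (forall y, List.In y s -> B y \/ C y) ->
  edef B (fun e => Y (params e s)).
Proof.
elim: s Y => [|c s IH] Y HY Hs.
  by apply: edef_ext HY => e; rewrite params_nil.
have -> : (fun e => Y (params e (c :: s))) = (fun e => Y (params (params e s) [:: c])).
  by apply: functional_extensionality => e; rewrite -params_cat.
apply: (IH (fun E => Y (params E [:: c]))); last by move=> y Hy; apply: Hs; right.
case: (Hs c (or_introl erefl)) => [Bc|/dclC]; last exact: edef_params_dcl.
apply: edef_mono (edef_params HY (A := B) (t := [:: c]) _); first by move=> y [].
by move=> y [<-|].
Qed.

Lemma edef_trans Y : edef (fun y => B y \/ C y) Y -> edef B Y.
Proof.
move=> [Z [s [HZ [Hs HY]]]]; apply: (edef_ext (fun e => iff_sym (HY e))).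
exact/edef_params_trans/Hs/edef_of0.
Qed.

End Transitivity.

Lemma edef_split (B C : M -> Prop) s Y :
  edef B Y -> (forall y, List.In y s -> B y \/ C y) ->
  exists Y2 t, edef B Y2 /\ (forall y, List.In y t -> C y) /\
    forall e, Y (params e s) <-> Y2 (params e t).
Proof.
elim/last_ind: s => [|s c IH] HY Hs.
  by exists Y, [::]; split=> //; split=> // e; rewrite params_nil.
have [Y2 [t [HY2 [Ht H]]]] := IH HY (fun y Hy => Hs y (proj2 (In_rcons _ _ _) (or_introl Hy))).
have Hr e : Y (params e (rcons s c)) <-> Y2 (params (params e [:: c]) t).
  by rewrite -cats1 params_cat.
case: (Hs c (proj2 (In_rcons _ _ _) (or_intror erefl))) => Hc; last first.
  exists Y2, (rcons t c); split=> //; split; last by move=> e; rewrite Hr -cats1 params_cat.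
  by move=> y /In_rcons [/Ht|->].
pose pi k := if k < size t then k.+1 else if k == size t then 0 else k.
exists (fun E => Y2 (params E [:: c] \o pi)), t; split.
  apply: edef_mono (edef_params (edef_comp pi HY2) (A := B) (t := [:: c]) _).
    by move=> y [].
  by move=> y [<-|].
split=> // e; rewrite Hr.
suff -> : params (params e [:: c]) t = params (params e t) [:: c] \o pi by [].
apply: functional_extensionality => k; rewrite /params /pi /=.
case: (ltngtP k (size t)) => Hk.
- by rewrite ltnS ltn0 subn1 /= Hk; apply: set_nth_default.
- have -> : (k - size t < 1) = false by lia.
  have -> : (k < 1) = false by lia.
  have -> : (k - 1 < size t) = false by lia.
  by congr e; lia.
- by rewrite Hk subnn.
Qed.

Lemma definable_edef A n (X : ('I_n -> M) -> Prop) :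
  definable A X <-> edef A (fun e => X (fun i => e i)).
Proof.
split.
- case=> f [b [Hb H]]; pose m := size b.
  pose rho i := if i < n then m + i else if i < n + m then i - n else i.
  have rho_inj : injective rho.
    by move=> x y; rewrite /rho; case: ifP; case: ifP; try case: ifP; try case: ifP; lia.
  exists (fun E => sat E (rename rho f)), b; split; first by exists (rename rho f).
  split=> // e; rewrite sat_rename //; apply: H.
    by move=> i /=; rewrite /rho ltn_ord /params ifF ?addKn //; lia.
  move=> k y Hky; have [Hk Hy] := nth_error_SomeP Hky; rewrite /= /rho ifF; last lia.
  by rewrite ifT; [rewrite /params addKn Hk Hy | lia].
- case=> Z [s [[f Hf] [Hs HY]]]; pose m := size s.
  pose rho k := if k < m then n + k else if k < m + n then k - m else k.
  have rho_inj : injective rho.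
    by move=> x y; rewrite /rho; case: ifP; case: ifP; try case: ifP; try case: ifP; lia.
  exists (rename rho f), s; split=> // x e Hx He; rewrite sat_rename //.
  pose e2 j := if j < n then e j else e (j + m).
  have -> : e \o rho = params e2 s.
    apply: functional_extensionality => k; rewrite /rho /params /e2 /= -/m.
    case: ifP => H1; first by apply: He; apply: nth_error_nth.
    by case: ifP => H2; [rewrite ifT; last lia | rewrite ifF; [congr e|]; lia].
  rewrite -Hf -HY; suff -> : (fun i : 'I_n => e2 i) = x by [].
  by apply: functional_extensionality => i; rewrite /e2 ltn_ord Hx.
Qed.

Lemma definable_ext A n (X X' : ('I_n -> M) -> Prop) :
  (forall x, X x <-> X' x) -> definable A X -> definable A X'.
Proof. by move=> H [f [b [Hb Hf]]]; exists f, b; split=> // x e H1 H2; rewrite -H; apply: Hf. Qed.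

Lemma dclS_edef A a : dclS A a <-> edef A (fun e => e 0 = a).
Proof. exact: definable_edef. Qed.

Lemma dclS_mono (A A' : M -> Prop) a : (forall y, A y -> A' y) -> dclS A a -> dclS A' a.
Proof. by move=> H [f [b [Hb Hf]]]; exists f, b; split=> // y /Hb /H. Qed.

Lemma dclS_refl (A : M -> Prop) a : A a -> dclS A a.
Proof. by move=> Aa; apply/dclS_edef; apply: edef_const. Qed.

Lemma dclS_trans (A C : M -> Prop) a : dclS (fun y => A y \/ C y) a ->
  (forall c, C c -> dclS A c) -> dclS A a.
Proof.
move=> /dclS_edef Ha HC; apply/dclS_edef; apply: edef_trans Ha => c Hc.
by apply/dclS_edef; apply: HC.
Qed.

Lemma dclS_finite (A D : M -> Prop) a : dclS (fun y => A y \/ D y) a ->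
  exists s, (forall b, List.In b s -> A b) /\ dclS (fun y => List.In y s \/ D y) a.
Proof.
move=> /dclS_edef [Z [s [HZ [Hs HY]]]].
have [Y [t [HY2 [Ht HYt]]]] :=
  edef_split (edef_of0 D HZ) (fun y Hy => proj1 (or_comm (A y) (D y)) (Hs y Hy)).
exists t; split=> //; apply/dclS_edef.
apply: edef_ext (edef_params HY2 (fun y Hy => Hy)) => e.
by rewrite HY HYt.
Qed.

End Formulas.

Section InducedStructure.
Variable S : Structure.
Variables P D : car S -> Prop.
Notation M := (car S).
Notation SP := (@expandP S P).
Notation SI := (@PInd S P D).

Fixpoint lift_formula (f : formula (sym S)) : formula (sym SP) :=
  match f with
  | FEq i j => FEq _ i j
  | FRel r vs => @FRel (sym SP) (Some r) vs
  | FNot g => FNot (lift_formula g)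
  | FAnd g h => FAnd (lift_formula g) (lift_formula h)
  | FEx i g => FEx i (lift_formula g)
  end.

Lemma sat_lift_formula (e : nat -> M) f : @sat SP e (lift_formula f) <-> @sat S e f.
Proof.
elim: f e => [i j|r vs|g IH|g IHg h IHh|i g IH] e //=.
- by rewrite IH.
- by rewrite IHg IHh.
- by split=> -[a Ha]; exists a; apply/IH.
Qed.

Lemma edef_expandP A Y : @edef S A Y -> @edef SP A Y.
Proof.
move=> [Z [s [[f Hf] [Hs HY]]]]; exists Z, s; split=> //.
by exists (lift_formula f) => e; rewrite sat_lift_formula.
Qed.

Lemma edef_inP A i : @edef SP A (fun e => P (e i)).
Proof. exact: (@edef_rel SP A None [:: i]). Qed.

Lemma interp_PInd (r : sym SI) (l : seq (car SI)) (d : car SI) :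
  interp r l <-> size l = pis_n r /\ @pis_Y S D r (fun i => proj1_sig (nth d l i)).
Proof.
split.
- case=> Hs [x [Hx HY]]; split=> //; congr (pis_Y _): HY.
  apply: functional_extensionality => i.
  by have [_ ->] := nth_error_SomeP (Hx i).
- case=> Hs HY; split=> //; exists (fun i => nth d l i); split=> //.
  by move=> i; apply: nth_error_nth; rewrite Hs.
Qed.

(* Each formula of [P_ind(D)] is, on assignments into [P], an [L_D]-definable
   condition in [<M, P>]: relativise the quantifiers to [P] and replace each
   [R_phi] by [phi]. *)
Lemma PInd_formula_edef (g : formula (sym SI)) :
  exists Z, @edef SP D Z /\ forall e : nat -> car SI, Z (sval \o e) <-> sat e g.
Proof.
elim: g => [i j|r vs|g [Z [HZ H]]|g [Z [HZ H]] h [Z' [HZ' H']]|i g [Z [HZ H]]].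
- exists (fun E => E i = E j); split; first exact: edef_eq.
  by move=> e /=; split=> [/proj1_sig_inj|->].
- have Hr := edef_expandP (iffLR (definable_edef _ _) (pis_def r)).
  exists (fun E => size vs = pis_n r /\ @pis_Y S D r (fun i => E (nth 0 vs i))); split.
    exact: edef_and (edef_prop _ _) (edef_comp (nth 0 vs) Hr).
  move=> e; rewrite [sat _ _](interp_PInd r (map e vs) (e 0)) size_map.
  split=> -[Hs HY]; split=> //; congr (pis_Y _): HY; apply: functional_extensionality => k;
    by rewrite /= (nth_map 0) // Hs.
- exists (fun E => ~ Z E); split; first exact: edef_not.
  by move=> e /=; rewrite H.
- exists (fun E => Z E /\ Z' E); split; first exact: edef_and.
  by move=> e /=; rewrite H H'.
- exists (fun E => exists a, P (upd E i a i) /\ Z (upd E i a)); split.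
    by apply: (@edef_ex SP D i (fun E => P (E i) /\ Z E)); apply: edef_and => //; apply: edef_inP.
  have val_upd e a : sval \o upd e i a = upd (sval \o e) i (proj1_sig a).
    by apply: functional_extensionality => k; rewrite /= /upd; case: eqP.
  move=> e /=; split.
  + case=> a []; rewrite /upd eqxx -/(upd _ i a) => Pa HZa.
    by exists (exist P a Pa); apply/H; rewrite val_upd.
  + case=> a Ha; exists (proj1_sig a); split; first by rewrite /upd eqxx; apply: proj2_sig.
    by rewrite -val_upd; apply/H.
Qed.

Lemma PInd_definable_restrict n (X : ('I_n -> M) -> Prop) (Hdef : definable D X) :
  @definable SI (fun _ => False) n (fun x => X (fun i => proj1_sig (x i))).
Proof.
apply/definable_edef; pose r : sym SI := MkPIndSym Hdef.
apply: edef_ext (edef_rel _ r (iota 0 n)) => e.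
apply: iff_trans (interp_PInd r _ (e 0)) _; rewrite size_map size_iota.
have -> : (fun i : 'I_n => sval (nth (e 0) (map e (iota 0 n)) i)) = (fun i => sval (e i)).
  by apply: functional_extensionality => i; rewrite (nth_map 0) ?size_iota ?nth_iota.
by split=> [[]|].
Qed.

End InducedStructure.

Section ClosureOfPoint.
Variables (M : Type) (lt : M -> M -> Prop).
Hypothesis lt_irr : forall x, ~ lt x x.
Hypothesis lt_total : forall x y, lt x y \/ x = y \/ lt y x.
Hypothesis no_endpoints : forall x, (exists l, lt l x) /\ (exists h, lt x h).

Lemma closure_point (a : M) (x : 'I_1 -> M) :
  Defs.closure lt (fun y : 'I_1 -> M => y ord0 = a) x <-> x ord0 = a.
Proof.
have ord1_eq0 (i : 'I_1) : i = ord0 by apply: val_inj; case: i => -[].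
split=> [Hc|Hx lo hi Hb]; last by exists x.
have [[l Hl] [h Hh]] := no_endpoints (x ord0).
case: (lt_total a (x ord0)) => [H|[//|H]].
- have [|y [Hy /(_ ord0)]] := Hc (fun _ => a) (fun _ => h).
    by move=> i; rewrite (ord1_eq0 i).
  by rewrite Hy => -[/lt_irr].
- have [|y [Hy /(_ ord0)]] := Hc (fun _ => l) (fun _ => a).
    by move=> i; rewrite (ord1_eq0 i).
  by rewrite Hy => -[_ /lt_irr].
Qed.

End ClosureOfPoint.

Section ClD.
Variable S : Structure.
Variables P D : car S -> Prop.
Notation M := (car S).
Notation SP := (@expandP S P).
Notation SI := (@PInd S P D).

Lemma dcl_indep_union (A : M -> Prop) : dcl_indep D P -> (forall y, A y -> P y) ->
  dcl_indep (fun y => (A y \/ D y) /\ ~ P y) P.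
Proof.
move=> HD HA y [[/HA Py|Dy] nPy] // Hy; apply: (HD y Dy); move: Hy; apply: dclS_mono.
by move=> z [[[[/HA|] nPz] Hne]|]; [|left|right].
Qed.

Lemma OP_dclS_expandP lt (A : M -> Prop) a : OP lt P ->
  (forall x, ~ lt x x) -> (forall x y, lt x y \/ x = y \/ lt y x) ->
  (forall x, (exists l, lt l x) /\ (exists h, lt x h)) ->
  dcl_indep (fun y => A y /\ ~ P y) P -> @dclS SP A a -> dclS A a.
Proof.
move=> HOP lt_irr lt_total no_endpoints HA Ha.
apply: definable_ext (HOP A HA 1 _ Ha) => x.
exact: closure_point.
Qed.

Lemma sval_params (e : nat -> car SI) s :
  sval \o params e s = params (sval \o e) (map sval s).
Proof.
apply: functional_extensionality => k; rewrite /params /= size_map; case: ifP => // H.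
by rewrite (nth_map (e 0)).
Qed.

Lemma clD_dclS_expandP (A : M -> Prop) a :
  clD P D A a -> @dclS SP (fun y => A y \/ D y) a.
Proof.
case=> Pa /definable_edef /= [Z [s [[g Hg] [Hs HY]]]].
have [Zt [HZt Ht]] := PInd_formula_edef g.
apply/definable_edef; apply: (@edef_ext SP _
  (fun e => P (e 0) /\ Zt (params (fun _ => e 0) (map sval s)))).
- move=> e /=; split=> [[Pe]|Hea].
    have := iffLR (Ht (@params SI (fun _ => exist P (e 0) Pe) s)).
    by rewrite sval_params => /(_ _) /Hg /HY /(f_equal sval).
  have Pe : P (e 0) by rewrite Hea.
  split=> //; suff: Zt (sval \o @params SI (fun _ => exist P (e 0) Pe) s).
    by rewrite sval_params; apply.
  by apply/Ht/Hg/HY/proj1_sig_inj.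
- apply: edef_and; first exact: edef_inP.
  have H : @edef SP (fun y => A y \/ D y) (fun E => Zt (params E (map sval s))).
    by apply: edef_params => // y /List.in_map_iff [p [<- /Hs]].
  exact: (edef_comp (fun _ => 0) H).
Qed.

Lemma clD_sub_dcl lt (A : M -> Prop) a : OP lt P -> dcl_indep D P ->
  (forall x, ~ lt x x) -> (forall x y, lt x y \/ x = y \/ lt y x) ->
  (forall x, (exists l, lt l x) /\ (exists h, lt x h)) ->
  (forall y, A y -> P y) -> clD P D A a -> dclS (fun y => A y \/ D y) a.
Proof.
move=> HOP HD lt_irr lt_total no_endpoints HA /clD_dclS_expandP.
exact: OP_dclS_expandP HOP lt_irr lt_total no_endpoints (dcl_indep_union HD HA).
Qed.

(* Off [P], [to_P p0] takes the junk value [p0]. *)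
Definition to_P (p0 : car SI) (y : M) : car SI :=
  match excluded_middle_informative (P y) with
  | left Py => exist P y Py
  | right _ => p0
  end.

Lemma to_P_val p0 y : P y -> sval (to_P p0 y) = y.
Proof. by rewrite /to_P; case: excluded_middle_informative. Qed.

Lemma dcl_sub_clD (A : M -> Prop) a : (forall y, A y -> P y) ->
  dclS (fun y => A y \/ D y) a -> P a -> clD P D A a.
Proof.
move=> HA /dclS_edef [Z [s [HZ [Hs HY]]]] Pa; exists Pa.
have [Y [t [HYD [Ht HYt]]]] :=
  edef_split (edef_of0 _ HZ) (fun y Hy => proj1 (or_comm (A y) (D y)) (Hs y Hy)).
pose k := size t; pose spread (z : 'I_k.+1 -> M) j := if j < k then z (inord j) else z ord_max.
have HX : definable D (fun z => Y (spread z)).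
  apply/definable_edef; apply: edef_ext (edef_comp (fun j => if j < k then j else k) HYD) => e.
  suff -> : spread (fun i => e i) = e \o (fun j => if j < k then j else k) by [].
  apply: functional_extensionality => j; rewrite /spread /=.
  by case: ifP => Hj //; rewrite inordK // ltnS ltnW.
pose tt := map (to_P (exist P a Pa)) t.
have Htt y : List.In y tt -> A (sval y).
  move=> /List.in_map_iff [x [<- /Ht Ax]]; rewrite to_P_val //; exact: HA.
have HR := iffLR (definable_edef _ _) (PInd_definable_restrict P HX).
have {}HR := edef_mono (fun p => or_ind id (@False_ind _)) (edef_params HR Htt).
apply/dclS_edef; apply: edef_ext HR => e /=.
have -> : spread (fun i => sval (params e tt i)) = params (fun _ => sval (e 0)) t.
  apply: functional_extensionality => j; rewrite /spread /params /tt size_map -/k.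
  case: ifP => Hj; last by rewrite ltnn subnn.
  rewrite inordK ?Hj; last by rewrite ltnS ltnW.
  rewrite (nth_map a) // to_P_val; first exact: set_nth_default.
  exact/HA/Ht/In_nth.
rewrite -HYt -HY; split=> [He|->//]; exact: proj1_sig_inj.
Qed.

End ClD.

Section DenseOrder.
Variables (M : Type) (lt : M -> M -> Prop).
Hypothesis lt_irr : forall x, ~ lt x x.
Hypothesis lt_trans : forall x y z, lt x y -> lt y z -> lt x z.
Hypothesis lt_total : forall x y, lt x y \/ x = y \/ lt y x.
Hypothesis no_endpoints : forall x, (exists l, lt l x) /\ (exists h, lt x h).

Definition le x y := lt x y \/ x = y.

Lemma le_lt_trans x y z : le x y -> lt y z -> lt x z.
Proof. by case=> [H|->] //; apply: lt_trans. Qed.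

Lemma lt_le_trans x y z : lt x y -> le y z -> lt x z.
Proof. by move=> H [H'|<-] //; apply: lt_trans H H'. Qed.

Lemma le_trans x y z : le x y -> le y z -> le x z.
Proof. by case=> [H|->] // H'; left; apply: lt_le_trans H H'. Qed.

Lemma lt_asym x y : lt x y -> ~ lt y x.
Proof. by move=> H H'; apply: lt_irr (lt_trans H H'). Qed.

Lemma le_not_lt x y : le x y -> ~ lt y x.
Proof. by case=> [|->]; [apply: lt_asym | apply: lt_irr]. Qed.

Lemma not_lt_le x y : ~ lt x y -> le y x.
Proof. by move=> H; case: (lt_total x y) => [/H []|[->|]]; [right|left]. Qed.

Definition fin_intervals (X : M -> Prop) :=
  exists pts ivs, forall t, X t <-> List.In t pts \/
    exists iv, List.In iv ivs /\ lower_ok lt iv.1 t /\ upper_ok lt iv.2 t.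

Definition boundary (X : M -> Prop) t := forall lo hi, lt lo t -> lt t hi ->
  (exists z, lt lo z /\ lt z hi /\ X z) /\ (exists z, lt lo z /\ lt z hi /\ ~ X z).

Definition opt_cons (o : option M) (s : seq M) := if o is Some x then x :: s else s.

Fixpoint endpoints (ivs : seq (option M * option M)) : seq M :=
  if ivs is iv :: ivs' then opt_cons iv.1 (opt_cons iv.2 (endpoints ivs')) else [::].

Lemma In_opt_cons o s x : List.In x (opt_cons o s) <-> o = Some x \/ List.In x s.
Proof.
case: o => [y|] /=; last by split=> [H|[|H]]; [right|..].
by split=> [[->|]|[[->]|]]; auto.
Qed.

Lemma In_endpoints ivs iv x : List.In iv ivs -> iv.1 = Some x \/ iv.2 = Some x ->
  List.In x (endpoints ivs).
Proof.
elim: ivs => [|iv' ivs IH] //= [<- H|/IH H Hx]; rewrite !In_opt_cons; tauto.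
Qed.

Lemma upper_bound_list x0 (L : seq M) : exists w, lt x0 w /\ forall c, List.In c L -> lt c w.
Proof.
elim: L => [|e L [w [Hw HL]]]; first by have [_ [h Hh]] := no_endpoints x0; exists h.
have [_ [h Hh]] := no_endpoints w.
case: (lt_total e w) => [Hew|[->|Hwe]]; first by exists w; split=> // c [<-|/HL].
  by exists h; split; [apply: lt_trans Hw Hh | move=> c [<-|/HL H] //; apply: lt_trans H Hh].
have [_ [h' Hh']] := no_endpoints e.
exists h'; split; first by apply: lt_trans (lt_trans Hw Hwe) Hh'.
by move=> c [<-|/HL H] //; apply: lt_trans (lt_trans H Hwe) Hh'.
Qed.

Lemma gap_around (L : seq M) t : ~ List.In t L ->
  exists lo hi, lt lo t /\ lt t hi /\ forall c, List.In c L -> ~ (lt lo c /\ lt c hi).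
Proof.
elim: L => [|c L IH] HtL.
  by have [[l Hl] [h Hh]] := no_endpoints t; exists l, h; split=> //; split=> //.
have [lo [hi [Hlo [Hhi Hgap]]]] := IH (fun H => HtL (or_intror H)).
case: (lt_total c t) => [Hct|[Hct|Htc]]; last 2 first.
- by case: HtL; left.
- case: (lt_total c hi) => [Hch|Hhc].
    exists lo, c; split=> //; split=> //.
    move=> d [<-|/Hgap Hd] [H1 H2]; first exact: lt_irr H2.
    by apply: Hd; split=> //; apply: lt_trans Hch.
  exists lo, hi; split=> //; split=> //.
  move=> d [<-|/Hgap Hd] [H1 H2]; last exact: Hd.
  by apply: (le_not_lt (x := hi)) H2; case: Hhc => [->|]; [right|left].
case: (lt_total lo c) => [Hlc|Hcl].
  exists c, hi; split=> //; split=> //.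
  move=> d [<-|/Hgap Hd] [H1 H2]; first exact: lt_irr H1.
  by apply: Hd; split=> //; apply: lt_trans H1.
exists lo, hi; split=> //; split=> //.
move=> d [<-|/Hgap Hd] [H1 H2]; last exact: Hd.
by apply: (le_not_lt (y := lo)) H1; case: Hcl => [<-|]; [right|left].
Qed.

Lemma min_in_list (L : seq M) (Q : M -> Prop) : (exists t, List.In t L /\ Q t) ->
  exists m, List.In m L /\ Q m /\ forall t, List.In t L -> Q t -> ~ lt t m.
Proof.
elim: L => [|e L IH] [t [Ht Qt]] //.
case: (classic (exists t, List.In t L /\ Q t)) => [/IH [m [Hm [Qm Hmin]]]|HL].
  case: (classic (Q e /\ lt e m)) => [[Qe Hem]|Hn].
    exists e; do !split=> //; first by left.
    move=> t' [<-|Ht'] Qt' H; first exact: lt_irr H.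
    exact: Hmin Ht' Qt' (lt_trans H Hem).
  exists m; do !split=> //; first by right.
  by move=> t' [<-|Ht'] Qt'; [move=> H; apply: Hn | apply: Hmin].
case: Ht => [Het|Ht]; last by case: HL; exists t.
subst t; exists e; do !split=> //; first by left.
by move=> t' [<-|Ht'] Qt'; [apply: lt_irr | case: HL; exists t'].
Qed.

Lemma first_above (Q : M -> Prop) (L : seq M) b : (forall t, Q t -> List.In t L) ->
  exists v : option M, (forall v', v = Some v' -> Q v' /\ lt b v') /\
    (forall t, Q t -> lt b t -> exists2 v', v = Some v' & le v' t).
Proof.
move=> HQ; case: (classic (exists t, List.In t L /\ Q t /\ lt b t)) => H.
  have [m [_ [Qm Hmin]]] := min_in_list H.
  exists (Some m); split=> [_ [<-] //|t Qt Hbt]; exists m => //.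
  by apply: not_lt_le => Htm; apply: Hmin (HQ t Qt) (conj Qt Hbt) Htm.
exists None; split=> // t Qt Hbt; case: H; exists t; split=> //; exact: HQ.
Qed.

Lemma boundary_finite X : fin_intervals X -> exists L, forall t, boundary X t -> List.In t L.
Proof.
move=> [pts [ivs HX]]; exists (pts ++ endpoints ivs) => t Hbd; apply: NNPP => HtL.
have [lo [hi [Hlo [Hhi Hgap]]]] := gap_around HtL.
have inL c : List.In c pts \/ List.In c (endpoints ivs) -> List.In c (pts ++ endpoints ivs).
  exact: List.in_or_app.
have side c z : List.In c (pts ++ endpoints ivs) -> lt lo z -> lt z hi ->
    (lt c z <-> lt c t) /\ (lt z c <-> lt t c).
  move=> Hc Hz1 Hz2; have Hout := Hgap c Hc.
  case: (lt_total c t) => [Hct|[Hct|Htc]]; last 2 first.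
  - by case: HtL; rewrite -Hct.
  - have Hzc : lt z c.
      apply: (lt_le_trans Hz2); apply: not_lt_le => Hch.
      by apply: Hout; split=> //; apply: lt_trans Hlo Htc.
    by split; split=> // H; [case: (lt_asym Hzc H) | case: (lt_asym Htc H)].
  have Hcz : lt c z.
    apply: le_lt_trans Hz1; apply: not_lt_le => Hlc.
    by apply: Hout; split=> //; apply: lt_trans Hct Hhi.
  by split; split=> // H; [case: (lt_asym Hcz H) | case: (lt_asym Hct H)].
have const z : lt lo z -> lt z hi -> (X z <-> X t).
  move=> Hz1 Hz2; rewrite !HX.
  have Hpz : ~ List.In z pts by move=> /(fun H => inL _ (or_introl H)) /Hgap; apply.
  have Hpt : ~ List.In t pts by move=> H; apply: HtL; apply: inL; left.
  have Hiv iv : List.In iv ivs ->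
      (lower_ok lt iv.1 z /\ upper_ok lt iv.2 z <-> lower_ok lt iv.1 t /\ upper_ok lt iv.2 t).
    case: iv => [l u] Hin /=.
    have E1 : lower_ok lt l z <-> lower_ok lt l t.
      case: l Hin => [l|] Hin //=.
      exact: (side l z (inL _ (or_intror (In_endpoints Hin (or_introl erefl)))) Hz1 Hz2).1.
    have E2 : upper_ok lt u z <-> upper_ok lt u t.
      case: u Hin => [u|] Hin //=.
      exact: (side u z (inL _ (or_intror (In_endpoints Hin (or_intror erefl)))) Hz1 Hz2).2.
    by rewrite E1 E2.
  by split=> -[//|[iv [Hin /(Hiv _ Hin) Hb]]]; right; exists iv.
have [[z1 [Hz1 [Hz1' Xz1]]] [z2 [Hz2 [Hz2' Xz2]]]] := Hbd lo hi Hlo Hhi.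
by apply: Xz2; apply/(const _ Hz2 Hz2')/(const _ Hz1 Hz1').
Qed.

Lemma fin_intervals_final_segment X : fin_intervals X ->
  (forall t, exists2 x, lt t x & X x) ->
  forall t0, exists2 w, lt t0 w & forall y, lt w y -> X y.
Proof.
move=> [pts [ivs HX]] Hunb t0.
have [w [Ht0w Hw]] := upper_bound_list t0 (pts ++ endpoints ivs).
have [x Hwx /HX [Hx|[[l u] [Hin [Hl Hu]]]]] := Hunb w.
  by case: (lt_asym Hwx); apply/Hw/List.in_or_app; left.
exists x; first exact: lt_trans Ht0w Hwx.
move=> y Hxy; apply/HX; right; exists (l, u); split=> //; split.
  by case: l {Hin Hu} Hl => //= l Hl; apply: lt_trans Hl Hxy.
case: u Hin Hu {Hl} => //= u Hin Hxu; case: (lt_asym Hwx).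
apply: (lt_trans Hxu); apply/Hw/List.in_or_app; right.
by apply: In_endpoints Hin _; right.
Qed.

Hypothesis lt_dense : forall x y, lt x y -> exists z, lt x z /\ lt z y.

Lemma between_max lo b c : lt lo c -> lt b c -> exists t, lt lo t /\ lt b t /\ lt t c.
Proof.
move=> Hlo Hb.
have [m [Hlom [Hbm Hmc]]] : exists m, le lo m /\ le b m /\ lt m c.
  case: (lt_total lo b) => [H|[<-|H]].
  - by exists b; split; [left | split; [right|]].
  - by exists lo; split; [right | split; [right|]].
  - by exists lo; split; [right | split; [left|]].
have [t [Hmt Htc]] := lt_dense Hmc.
by exists t; split; [apply: le_lt_trans Hlom Hmt | split; [apply: le_lt_trans Hbm Hmt|]].
Qed.

Lemma between_min lo b c : lt lo b -> lt lo c -> exists t, lt lo t /\ lt t b /\ lt t c.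
Proof.
move=> Hb Hc.
have [m [Hlom [Hmb Hmc]]] : exists m, lt lo m /\ le m b /\ le m c.
  case: (lt_total b c) => [H|[<-|H]].
  - by exists b; split; [|split; [right|left]].
  - by exists b; split; [|split; right].
  - by exists c; split; [|split; [left|right]].
have [t [Hlot Htm]] := lt_dense Hlom.
by exists t; split; [|split; apply: lt_le_trans Htm _].
Qed.

Lemma fin_intervals_inf (X : M -> Prop) x0 lb : fin_intervals X -> X x0 ->
  (forall t, X t -> ~ lt t lb) ->
  exists c, (forall t, X t -> ~ lt t c) /\
            forall h, lt c h -> exists s, X s /\ ~ lt s c /\ lt s h.
Proof.
move=> [pts [ivs HX]] Hx0 Hlb.
have in_X iv t : List.In iv ivs -> lower_ok lt iv.1 t -> upper_ok lt iv.2 t -> X t.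
  by move=> Hiv Hl Hu; apply/HX; right; exists iv.
have no_None u t : List.In (None, u) ivs -> upper_ok lt u t -> False.
  move=> Hiv Hu; have [[l Hl] _] := no_endpoints lb.
  have Hlt : lt l t by apply: lt_le_trans Hl (not_lt_le (Hlb t (in_X _ _ Hiv I Hu))).
  apply: (Hlb l) Hl; apply: (in_X _ _ Hiv I).
  by case: u Hiv Hu => [u'|] //= _ Hu'; apply: lt_trans Hlt Hu'.
pose Q c := (List.In c pts /\ X c) \/
   (exists u, List.In (Some c, u) ivs /\ exists t, lt c t /\ upper_ok lt u t).
pose L := pts ++ endpoints ivs.
have QL c : Q c -> List.In c L.
  move=> [[H _]|[u [H _]]]; apply: List.in_or_app; [left|right] => //.
  by apply: In_endpoints H _; left.
have [m [_ [Qm Hmin]]] : exists m, List.In m L /\ Q m /\ forall t, List.In t L -> Q t -> ~ lt t m.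
  apply: min_in_list.
  case: (proj1 (HX x0) Hx0) => [Hp|[[[l|] u] [Hiv [Hl Hu]]]].
  - by exists x0; split; [apply: QL; left|left].
  - have Ql : Q l by right; exists u; split=> //; exists x0.
    by exists l; split; [apply: QL|].
  - by case: (no_None _ _ Hiv Hu).
exists m; split.
- move=> t Ht; case: (proj1 (HX t) Ht) => [Hp|[[[l|] u] [Hiv [Hl Hu]]]].
  + have Qt : Q t by left.
    exact: Hmin (QL _ Qt) Qt.
  + have Ql : Q l by right; exists u; split=> //; exists t.
    by move=> Htm; apply: (Hmin _ (QL _ Ql) Ql); apply: lt_trans Hl Htm.
  + by case: (no_None _ _ Hiv Hu).
- move=> h Hmh; case: Qm => [[_ Xm]|[u [Hiv [t [Hmt Hu]]]]].
    by exists m; do !split=> //; apply: lt_irr.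
  have [s [Hms [Hst Hsh]]] := between_min Hmt Hmh.
  exists s; split; last by split; [apply: lt_asym|].
  apply: (in_X _ _ Hiv) => //=.
  by case: u Hiv Hu => //= u' _; apply: lt_trans Hst.
Qed.

(* [V] is the graph of a partial function: [V c z] reads "the value at [z] is [c]". *)
Definition loc_const (V : M -> M -> Prop) y :=
  exists c lo hi, lt lo y /\ lt y hi /\ forall z, lt lo z -> lt z hi -> V c z.

(* Connectedness: at the infimum of the points of [[b, y]] where the value is
   not [a], the value cannot be locally constant, so that infimum would be a
   boundary point of [loc_const V]. *)
Lemma loc_const_propagate V a b y :
  (forall c c' z, V c z -> V c' z -> c = c') ->
  loc_const V b -> V a b -> lt b y ->
  (forall c, lt b c -> le c y -> ~ boundary (loc_const V) c) ->
  fin_intervals (fun t => le b t /\ le t y /\ ~ V a t) -> V a y.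
Proof.
move=> V_fun LCb Vab Hby Hnobd Hfin; apply: NNPP => Hy.
pose bad t := le b t /\ le t y /\ ~ V a t.
have bad_y : bad y by split; [left | split; [right|]].
have [c [Hc1 Hc2]] := fin_intervals_inf Hfin bad_y (fun t Ht => le_not_lt (proj1 Ht)).
have Hbc : le b c.
  apply: not_lt_le => Hcb; have [s [[Hs _] [_ Hsb]]] := Hc2 _ Hcb.
  exact: le_not_lt Hs Hsb.
have Hcy : le c y by apply: not_lt_le; apply: Hc1.
have good t : le b t -> lt t c -> V a t.
  move=> Hbt Htc; apply: NNPP => Hn; apply: (Hc1 t) => //.
  by do !split=> //; left; apply: lt_le_trans Htc Hcy.
case: (classic (loc_const V c)) => [[c0 [lo [hi [Hlo [Hhi Hv]]]]]|HLc].
- have Hc0 : c0 = a.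
    case: Hbc => [Hbc|Hbc]; last by subst c; apply: V_fun (Hv _ Hlo Hhi) Vab.
    have [t [Hlot [Hbt Htc]]] := between_max Hlo Hbc.
    by apply: (V_fun _ _ t); [apply: Hv => //; apply: lt_trans Htc Hhi | apply: good => //; left].
  subst c0; have [s [[_ [_ Hs]] [Hsc Hsh]]] := Hc2 _ Hhi.
  by apply: Hs; apply: Hv => //; apply: lt_le_trans Hlo (not_lt_le Hsc).
- case: Hbc => [Hbc|Hbc]; last by subst c.
  apply: (Hnobd c Hbc Hcy) => lo hi Hlo Hhi; split; last by exists c.
  have [t [Hlot [Hbt Htc]]] := between_max Hlo Hbc.
  exists t; do !split=> //; first exact: lt_trans Htc Hhi.
  exists a, b, c; split=> //; split=> // z Hbz Hzc.
  by apply: good => //; left.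
Qed.

End DenseOrder.

Section OminimalGroup.
Variable S : Structure.
Notation M := (car S).
Variables (lt : M -> M -> Prop) (add : M -> M -> M) (zero one : M).
Hypothesis Hom : omin_ordered_group lt add zero one.

Lemma lt_definable : definable (fun _ => False) (fun x : 'I_2 -> M => lt (x ord0) (x ord_max)).
Proof. by case: Hom. Qed.
Lemma add_definable : definable (fun _ => False)
  (fun x : 'I_3 -> M => add (x ord0) (x (inord 1)) = x ord_max).
Proof. by case: Hom => _ []. Qed.
Lemma lt_irr : forall x, ~ lt x x.
Proof. by case: Hom => _ [_ [_ [_ []]]]. Qed.
Lemma lt_trans : forall x y z, lt x y -> lt y z -> lt x z.
Proof. by case: Hom => _ [_ [_ [_ [_ []]]]]. Qed.
Lemma lt_total : forall x y, lt x y \/ x = y \/ lt y x.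
Proof. by case: Hom => _ [_ [_ [_ [_ [_ []]]]]]. Qed.
Lemma addA : forall x y z, add x (add y z) = add (add x y) z.
Proof. by case: Hom => _ [_ [_ [_ [_ [_ [_ []]]]]]]. Qed.
Lemma add0 : forall x, add zero x = x /\ add x zero = x.
Proof. by case: Hom => _ [_ [_ [_ [_ [_ [_ [_ []]]]]]]]. Qed.
Lemma add_inv : forall x, exists y, add x y = zero /\ add y x = zero.
Proof. by case: Hom => _ [_ [_ [_ [_ [_ [_ [_ [_ []]]]]]]]]. Qed.
Lemma lt_add2 : forall x y z, lt x y -> lt (add z x) (add z y) /\ lt (add x z) (add y z).
Proof. by case: Hom => _ [_ [_ [_ [_ [_ [_ [_ [_ [_ []]]]]]]]]]. Qed.
Lemma lt01 : lt zero one.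
Proof. by case: Hom => _ [_ [_ [_ [_ [_ [_ [_ [_ [_ [_ []]]]]]]]]]]. Qed.
Lemma ominimal (X : ('I_1 -> M) -> Prop) : definable (fun _ => True) X ->
  fin_intervals lt (fun t => X (fun _ => t)).
Proof.
case: Hom => _ [_ [_ [_ [_ [_ [_ [_ [_ [_ [_ [_ H]]]]]]]]]]] /H [pts [ivs HX]].
by exists pts, ivs => t; apply: HX.
Qed.

Lemma lt_add_pos x e : lt zero e -> lt x (add x e).
Proof. by move=> /(lt_add2 x) [+ _]; rewrite (add0 x).2. Qed.

Lemma no_endpoints x : (exists l, lt l x) /\ (exists h, lt x h).
Proof.
split; last by exists (add x one); apply: lt_add_pos lt01.
have [y [H1 H2]] := add_inv one.
have Hy0 : lt y zero by have [_] := lt_add2 y lt01; rewrite (add0 y).1 H1.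
by exists (add x y); have [] := lt_add2 x Hy0; rewrite (add0 x).2.
Qed.

Section Gap.
Variable e : M.
Hypothesis e_pos : lt zero e.
Hypothesis e_gap : forall z, lt zero z -> ~ lt z e.

Lemma gap_step p q : lt p q -> le lt (add p e) q.
Proof.
move=> Hpq; apply: (not_lt_le lt_total) => Hq.
have [ip [Hpi Hip]] := add_inv p.
apply: (e_gap (z := add ip q)); first by have [] := lt_add2 ip Hpq; rewrite Hip.
by have [] := lt_add2 ip Hq; rewrite addA Hip (add0 e).1.
Qed.

Lemma add_double_le p q : le lt p q -> le lt (add p p) (add q q).
Proof.
case=> [Hpq|<-]; last by right.
by left; apply: lt_trans (lt_add2 p Hpq).1 (lt_add2 q Hpq).2.
Qed.

Lemma gap_no_double w u : add u u <> add (add w w) e.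
Proof.
move=> Hu; case: (lt_total w u) => [Hwu|Huw].
- have := add_double_le (gap_step Hwu); rewrite Hu => /(le_not_lt lt_irr lt_trans); apply.
  by rewrite -addA; apply: (lt_add2 (add w e) (lt_add_pos w e_pos)).2.
- have Huw' : le lt u w by case: Huw => [->|]; [right|left].
  have := add_double_le Huw'; rewrite Hu => /(le_not_lt lt_irr lt_trans); apply.
  exact: lt_add_pos.
Qed.

End Gap.

Lemma edef_lt (B : M -> Prop) i j : edef B (fun e => lt (e i) (e j)).
Proof.
have := edef_comp (fun k => if k == 0 then i else j) (iffLR (definable_edef _ _) lt_definable).
by apply: edef_mono => y [].
Qed.

Lemma edef_add (B : M -> Prop) i j k : edef B (fun e => add (e i) (e j) = e k).
Proof.
have H := edef_comp (fun l => if l == 0 then i else if l == 1 then j else k)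
  (iffLR (definable_edef _ _) add_definable).
by apply: edef_ext (edef_mono (A' := B) (fun y => False_ind _) H) => e /=; rewrite inordK.
Qed.

Lemma fin_intervals_edef (B : M -> Prop) X : edef B (fun e => X (e 0)) -> fin_intervals lt X.
Proof.
move=> H; apply: (ominimal (X := fun x => X (x ord0))).
exact/definable_edef/(edef_mono _ H).
Qed.

(* A discrete o-minimal ordered group is impossible: the doubles would contain
   a final segment, hence two consecutive elements. *)
Lemma lt_dense x y : lt x y -> exists z, lt x z /\ lt z y.
Proof.
move=> Hxy; apply: NNPP => Hn.
have [ix [Hxi Hix]] := add_inv x; pose e := add ix y.
have e_pos : lt zero e by have [] := lt_add2 ix Hxy; rewrite Hix.
have e_gap z : lt zero z -> ~ lt z e.
  move=> H1 H2; apply: Hn; exists (add x z); split; first exact: lt_add_pos.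
  by have [] := lt_add2 x H2; rewrite /e addA Hxi (add0 y).1.
pose double t := exists w, add w w = t.
have Hdouble : edef (fun _ => True) (fun E => double (E 0)).
  by apply: edef_ext (edef_ex 1 (edef_add _ 1 1 0)) => E; rewrite /upd.
have above_double t : lt zero t -> lt t (add t t) by exact: lt_add_pos.
have [w0 _ Hw0] : exists2 w0, lt zero w0 & forall y, lt w0 y -> double y.
  apply: (fin_intervals_final_segment lt_irr lt_trans lt_total no_endpoints) zero.
    exact: fin_intervals_edef Hdouble.
  move=> t; have [w [Hw /(_ t (or_introl erefl)) Htw]] :=
    upper_bound_list lt_trans lt_total no_endpoints zero [:: t].
  by exists (add w w); [apply: lt_trans Htw (above_double _ Hw) | exists w].
have [w [Hw /(_ w0 (or_introl erefl)) Hw0w]] :=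
  upper_bound_list lt_trans lt_total no_endpoints zero [:: w0].
have Hww : lt w0 (add w w) := lt_trans Hw0w (above_double _ Hw).
have [u Hu] := Hw0 _ (lt_trans Hww (lt_add_pos (add w w) e_pos)).
exact: gap_no_double e_pos e_gap w u Hu.
Qed.

Lemma edef_min_dcl (B : M -> Prop) X m : edef B (fun e => X (e 0)) -> X m ->
  (forall s, X s -> ~ lt s m) -> dclS B m.
Proof.
move=> HX Xm Hmin; apply/dclS_edef.
have HXlt := edef_and (edef_comp (fun _ => 1) HX) (edef_lt B 1 0).
apply: edef_ext (edef_and HX (edef_not (edef_ex 1 HXlt))) => e; rewrite /upd /=.
split=> [[Xe Hn]|->]; last by split=> // -[s []]; apply: Hmin.
case: (lt_total (e 0) m) => [H|[//|Hme]]; first by case: (Hmin _ Xe H).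
by case: Hn; exists m.
Qed.

Lemma finite_edef_dcl (B : M -> Prop) X L : edef B (fun e => X (e 0)) ->
  (forall t, X t -> List.In t L) -> forall t, X t -> dclS B t.
Proof.
move: {2}(size L) (leqnn (size L)) => n; elim: n B X L => [|n IH] B X L HL HX HXL t Xt.
  by move: HL; rewrite leqn0 => /nilP HL; subst L; case: (HXL t Xt).
have [m [HmL [Xm Hmin]]] := min_in_list lt_irr lt_trans (ex_intro _ t (conj (HXL t Xt) Xt)).
have Hm := edef_min_dcl HX Xm (fun s Xs => Hmin s (HXL s Xs) Xs).
case: (classic (t = m)) => [->//|Htm].
have HX' : edef (fun y => B y \/ y = m) (fun e => X (e 0) /\ e 0 <> m).
  apply: edef_and; first by apply: edef_mono HX => y; left.
  by apply: edef_not; apply: edef_const; right.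
have [L' [HL' HL'c]] := In_remove HmL.
apply: (IH B (fun z => X z /\ z <> m) L') => //.
- by rewrite -ltnS; apply: leq_trans HL' HL.
- by apply: edef_trans HX' => c ->; apply/dclS_edef.
- by move=> z [Xz Hz]; apply: HL'c => //; apply: HXL.
Qed.

Lemma edef_boundary (B : M -> Prop) X : edef B (fun e => X (e 0)) ->
  edef B (fun e => boundary lt X (e 0)).
Proof.
move=> HX; have HX3 := edef_comp (fun _ => 3) HX.
have in_box := edef_and (edef_lt B 1 3) (edef_lt B 3 2).
have Hbox := edef_imp (edef_lt B 1 0) (edef_imp (edef_lt B 0 2)
  (edef_and (edef_ex 3 (edef_and in_box HX3)) (edef_ex 3 (edef_and in_box (edef_not HX3))))).
apply: edef_ext (edef_all 1 (edef_all 2 Hbox)) => e; rewrite /upd /=.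
by split=> H lo hi H1 H2; have [[z Hz] [z' Hz']] := H lo hi H1 H2;
  split; [exists z | exists z' | exists z | exists z']; tauto.
Qed.

Lemma boundary_dcl (B : M -> Prop) X t : edef B (fun e => X (e 0)) ->
  boundary lt X t -> dclS B t.
Proof.
move=> HX; have [L HL] := boundary_finite lt_irr lt_trans lt_total no_endpoints
  (fin_intervals_edef HX).
exact: finite_edef_dcl (edef_boundary HX) HL t.
Qed.

Lemma edef_upper_ok (C : M -> Prop) v i : (forall v', v = Some v' -> C v') ->
  edef C (fun e => upper_ok lt v (e i)).
Proof.
case: v => [v'|] Hv /=; last exact: edef_prop.
have Ht y : List.In y [:: v'] -> C y by case=> [<-|[]]; apply: Hv.
have H := edef_params (edef_lt C i.+1 0) Ht.
by apply: edef_ext (edef_mono _ H) => [e|y []//]; rewrite params1 /upd.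
Qed.

Section Graph.
Variables (B : M -> Prop) (V : M -> M -> Prop).
Hypothesis HV : edef B (fun e => V (e 0) (e 1)).
Hypothesis V_fun : forall c c' z, V c z -> V c' z -> c = c'.

Lemma edef_loc_const : edef B (fun e => loc_const lt V (e 0)).
Proof.
have Hz : edef B (fun E => lt (E 2) (E 4) -> lt (E 4) (E 3) -> V (E 1) (E 4)).
  apply/edef_imp/edef_imp; [exact: edef_lt | exact: edef_lt |].
  exact: (edef_comp (fun j => if j == 0 then 1 else 4) HV).
have H := edef_and (edef_lt B 2 0) (edef_and (edef_lt B 0 3) (edef_all 4 Hz)).
by apply: edef_ext (edef_ex 1 (edef_ex 2 (edef_ex 3 H))) => e; rewrite /upd.
Qed.

Lemma edef_bad_points a b y :
  edef (fun _ => True) (fun e => le lt b (e 0) /\ le lt (e 0) y /\ ~ V a (e 0)).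
Proof.
have H := edef_and (edef_or (edef_lt B 0 3) (edef_eq B 0 3))
  (edef_and (edef_or (edef_lt B 3 1) (edef_eq B 3 1))
    (edef_not (edef_comp (fun j => if j == 0 then 2 else 3) HV))).
have := edef_params H (t := [:: b; y; a]) (A := fun _ => True) (fun _ _ => I).
by move=> /(edef_mono (A' := fun _ => True) (fun _ _ => I)); apply: edef_ext => e.
Qed.

Lemma value_persists a b v : loc_const lt V b -> V a b ->
  (forall t, boundary lt (loc_const lt V) t -> lt b t -> exists2 v', v = Some v' & le lt v' t) ->
  forall y, lt b y -> upper_ok lt v y -> V a y.
Proof.
move=> LCb Vab Hv y Hby Hyv.
apply: (loc_const_propagate lt_irr lt_trans lt_total no_endpoints lt_dense V_fun LCb) => //.
  move=> c Hbc Hcy /(Hv c) /(_ Hbc) [v' Hv' Hv'c]; rewrite Hv' /= in Hyv.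
  exact: (le_not_lt lt_irr lt_trans (le_trans lt_trans Hv'c Hcy) Hyv).
exact: fin_intervals_edef (edef_bad_points a b y).
Qed.

(* [a] is the value of [V] on the whole interval from [b] to the first boundary
   point [v] of the [B]-definable set [loc_const V]; so [a] is definable from
   [v], which lies in [dcl B]. *)
Lemma loc_const_dcl a b lo hi : lt lo b -> lt b hi ->
  (forall z, lt lo z -> lt z hi -> V a z) -> dclS B a.
Proof.
move=> Hlo Hhi Ha; have LCb : loc_const lt V b by exists a, lo, hi.
have Vab : V a b by apply: Ha.
have [L HL] := boundary_finite lt_irr lt_trans lt_total no_endpoints
  (fin_intervals_edef edef_loc_const).
have [v [Hv1 Hv2]] := first_above lt_irr lt_trans lt_total b HL.
have Hpersist := value_persists LCb Vab Hv2.
have Hb : upper_ok lt v b by case: v Hv1 {Hv2 Hpersist} => //= v' /(_ v' erefl) [].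
have above_b w : upper_ok lt v w -> exists y, lt w y /\ lt b y /\ upper_ok lt v y.
  case: v Hb {Hv1 Hv2 Hpersist} => [v'|] /= Hb Hw.
    by have [y [? [? ?]]] := between_max lt_trans lt_total lt_dense Hw Hb; exists y.
  have [y [Hwy /(_ b (or_introl erefl)) Hby]] :=
    upper_bound_list lt_trans lt_total no_endpoints w [:: b].
  by exists y.
pose C z := v = Some z.
have HW : edef (fun z => B z \/ C z) (fun e => exists w, upper_ok lt v w /\
    forall y, lt w y -> upper_ok lt v y -> V (e 0) y).
  have HV' : edef (fun z => B z \/ C z) (fun e => V (e 0) (e 2)).
    by apply: edef_mono (edef_comp (fun j => if j == 0 then 0 else 2) HV) => z; left.
  have Hup i : edef (fun z => B z \/ C z) (fun e => upper_ok lt v (e i)).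
    by apply: edef_upper_ok => z; right.
  have H := edef_and (Hup 1) (edef_all 2 (edef_imp (edef_lt _ 1 2) (edef_imp (Hup 2) HV'))).
  by apply: edef_ext (edef_ex 1 H) => e; rewrite /upd.
apply/dclS_edef; apply: (edef_trans (C := C)) => [c /Hv1 [Hbd _]|].
  by apply/dclS_edef; apply: boundary_dcl Hbd; apply: edef_loc_const.
apply: edef_ext HW => e; split=> [[w [Hw Hc]]|->]; last by exists b; split.
have [y [Hwy [Hby Hyv]]] := above_b w Hw.
exact: V_fun (Hc y Hwy Hyv) (Hpersist y Hby Hyv).
Qed.

Lemma graph_exchange a b : V a b -> ~ dclS B a -> dclS (fun y => B y \/ y = a) b.
Proof.
move=> Vab Ha; apply: NNPP => Hb; apply: Ha.
have HVa : edef (fun y => B y \/ y = a) (fun e => V a (e 0)).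
  have Ha1 y : List.In y [:: a] -> y = a by case=> [<-|[]].
  have H := edef_mono (A' := fun y => B y \/ y = a) _ (edef_params HV Ha1).
  by apply: edef_ext (H _) => [e|y []]; [rewrite params1 /upd | right | left].
case: (classic (exists lo hi, lt lo b /\ lt b hi /\ forall z, lt lo z -> lt z hi -> V a z)).
  by case=> lo [hi [Hlo [Hhi Hv]]]; apply: loc_const_dcl Hlo Hhi Hv.
move=> Hint; case: Hb; apply: boundary_dcl HVa _ => lo hi Hlo Hhi; split; first by exists b.
apply: NNPP => Hn; apply: Hint; exists lo, hi; split=> //; split=> // z Hz1 Hz2.
by apply: NNPP => Hnz; apply: Hn; exists z.
Qed.

End Graph.

Lemma dcl_exchange (B : M -> Prop) a b :
  dclS (fun y => B y \/ y = b) a -> ~ dclS B a -> dclS (fun y => B y \/ y = a) b.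
Proof.
move=> /dclS_edef [Z [s [HZ [Hs HY]]]].
have [Y [t [HYB [Ht HYt]]]] := edef_split (edef_of0 B HZ) Hs.
pose k := size t; pose F x y := Y (fun j => if j < k then y else x).
pose V c y := forall x, F x y <-> x = c.
have HV : edef B (fun e => V (e 0) (e 1)).
  have HF : edef B (fun e => F (e 2) (e 1)).
    apply: edef_ext (edef_comp (fun j => if j < k then 1 else 2) HYB) => e.
    suff -> : e \o (fun j => if j < k then 1 else 2) = (fun j => if j < k then e 1 else e 2).
      by [].
    by apply: functional_extensionality => j /=; case: ifP.
  by apply: edef_ext (edef_all 2 (edef_iff HF (edef_eq B 2 0))) => e; rewrite /upd.
have Vab : V a b.
  move=> x; rewrite (HY (fun _ => x)) HYt /F.
  suff -> : params (fun _ => x) t = (fun j => if j < k then b else x) by [].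
  apply: functional_extensionality => j; rewrite /params -/k; case: ifP => // Hj.
  exact: Ht (In_nth _ Hj).
apply: (graph_exchange HV _ Vab) => c c' z H1 H2.
exact/H2/H1.
Qed.

End OminimalGroup.

Lemma clD_pregeometry (S : Structure) (lt : car S -> car S -> Prop)
    (add : car S -> car S -> car S) (zero one : car S) (P D : car S -> Prop) :
  omin_ordered_group lt add zero one ->
  (forall A, (forall a, A a -> P a) ->
     forall a, clD P D A a <-> dclS (fun y => A y \/ D y) a /\ P a) ->
  pregeometry P (clD P D).
Proof.
move=> Hom clDE.
have clD_P A a : clD P D A a -> P a by case.
split; first by move=> A _ a /clD_P.
split.
  move=> A HA a Aa; apply/clDE => //; split; last exact: HA.
  by apply: dclS_refl; left.
split.
  move=> A B HA HB HAB a /(clDE _ HA) [Ha Pa]; apply/clDE => //; split=> //.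
  by apply: dclS_mono Ha => y [/HAB|]; [left|right].
split.
  move=> A HA a /(clDE _ (clD_P A)) [Ha Pa]; apply/clDE => //; split=> //.
  apply: (dclS_trans (C := clD P D A)); first by apply: dclS_mono Ha => y; tauto.
  by move=> c /(clDE _ HA) [].
split.
  move=> A HA a /(clDE _ HA) [/dclS_finite [s [Hs Ha]] Pa]; exists s; split=> //.
  by apply/clDE; [move=> b /Hs /HA | split].
move=> A HA a b Pa Pb Hab Hna.
have HAb y : A y \/ y = b -> P y by case=> [/HA|->].
have [Hab' _] := proj1 (clDE _ HAb a) Hab.
apply/clDE; [by move=> y [/HA|->] | split=> //].
have Hna' : ~ dclS (fun y => A y \/ D y) a by move=> H; apply: Hna; apply/clDE.
have Hab'' : dclS (fun y => (A y \/ D y) \/ y = b) a by apply: dclS_mono Hab' => y; tauto.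
by apply: dclS_mono (dcl_exchange Hom Hab'' Hna') => y; tauto.
Qed.

Theorem corollary3p7 (S : Structure) (lt : car S -> car S -> Prop)
    (add : car S -> car S -> car S) (zero one : car S)
    (P D : car S -> Prop) :
  omin_ordered_group lt add zero one ->
  dcl_indep D P ->
  OP lt P ->
  ind P D ->
  (forall A : car S -> Prop, (forall a, A a -> P a) ->
     forall a, clD P D A a <-> (dclS (fun y => A y \/ D y) a /\ P a)) /\
  pregeometry P (clD P D).
Proof.
move=> Hom HD HOP _.
have clDE A : (forall a, A a -> P a) ->
    forall a, clD P D A a <-> (dclS (fun y => A y \/ D y) a /\ P a).
  move=> HA a; split=> [H|[Ha Pa]]; last exact: dcl_sub_clD.
  split; last by case: H.
  exact: clD_sub_dcl HOP HD (lt_irr Hom) (lt_total Hom) (no_endpoints Hom) HA H.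
by split=> //; apply: clD_pregeometry Hom clDE.
Qed.
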